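(* Let $\mathcal{C}$ be a binary cyclic code of length $n$ whose generator polynomial $g\in\mathbb{F}_2[X]$, $g\mid X^n-1$, of degree $r$, is a product of distinct irreducible polynomials. Then the burst-covering radius $b$ of $\mathcal{C}$ satisfies \[ b=\max_{f\in\mathcal{F}_r}\Bigl(\min_{k\ge0}\deg\bigl(X^kf \bmod g\bigr)+1\Bigr), \] where $\mathcal{F}_r=\{f\in\mathbb{F}_2[X]:\deg f<r\}$.
   Context: The burst-covering radius of a code $\mathcal{C}\subseteq\mathbb{F}_2^n$ is the least $b$ such that for every $y\in\mathbb{F}_2^n$ there is $c\in\mathcal{C}$ with $\operatorname{supp}(y-c)\subseteq\{i,i+1,\dots,i+b-1\}$ (indices modulo $n$) for some $i$; equivalently, for linear codes, the least $b$ such that every syndrome is a linear combination of $b$ cyclically consecutive columns of a parity-check matrix. Convention: $\deg(0)=-\infty$. *)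

From HB Require Import structures.
From mathcomp Require Import all_boot all_order all_algebra.
Set Implicit Arguments. Unset Strict Implicit. Unset Printing Implicit Defensive.
Import GRing.Theory.
Local Open Scope ring_scope.

Definition word_poly (n : nat) (c : 'rV['F_2]_n) : {poly 'F_2} :=
  \sum_(i < n) (c ord0 i)%:P * 'X^i.

(* The binary cyclic code of length n generated by g: the ideal <g> of
   F_2[X]/(X^n - 1), viewed as a set of words. *)
Definition cyclic_code (n : nat) (g : {poly 'F_2}) (c : 'rV['F_2]_n) : Prop :=
  exists a : {poly 'F_2}, word_poly c = (a * g) %% ('X^n - 1).

Definition burst_covers (n : nat) (C : 'rV['F_2]_n -> Prop) (b : nat) : Prop :=
  forall y : 'rV['F_2]_n, exists c, C c /\
    exists i : 'I_n, forall j : 'I_n, y ord0 j != c ord0 j ->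
      exists t : nat, (t < b)%N /\ nat_of_ord j = ((nat_of_ord i + t) %% n)%N.

Definition burst_covering_radius (n : nat) (C : 'rV['F_2]_n -> Prop) (b : nat) : Prop :=
  burst_covers C b /\ forall b', burst_covers C b' -> (b <= b')%N.

Definition prod_distinct_irreducibles (g : {poly 'F_2}) : Prop :=
  exists s : seq {poly 'F_2}, uniq s /\ (forall p, p \in s -> irreducible_poly p)
    /\ g = \prod_(p <- s) p.

(* m = min_{k >= 0} (deg(X^k f mod g) + 1), expressed with size = deg + 1
   (size 0 = 0). *)
Definition is_min_deg1 (g f : {poly 'F_2}) (m : nat) : Prop :=
  (exists k : nat, size ((('X^k * f) %% g)%R) = m) /\
  (forall k : nat, (m <= size ((('X^k * f) %% g)%R))%N).

Definition is_max_min_deg1 (g : {poly 'F_2}) (r : nat) (M : nat) : Prop :=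
  (exists f : {poly 'F_2}, (size f <= r)%N /\ is_min_deg1 g f M) /\
  (forall (f : {poly 'F_2}) (m : nat), (size f <= r)%N -> is_min_deg1 g f m -> (m <= M)%N).

(* A word y is covered by a burst of length b starting at position i iff y
   agrees modulo g with a polynomial supported on the cyclic window
   {i, ..., i + b - 1}.  Multiplying by X^(n - i) rotates that window to the
   front modulo X^n - 1, hence modulo g, and multiplying by a power of X is
   invertible modulo g.  So C is covered by bursts of length b iff every
   residue f with deg f < r has a shift X^k f mod g of degree < b, and the
   least such b is the max over f of the min over k of deg(X^k f mod g) + 1. *)

From HB Require Import structures.
From mathcomp Require Import all_boot all_order all_algebra.
From Stdlib Require Import Classical.
Set Implicit Arguments. Unset Strict Implicit. Unset Printing Implicit Defensive.
Import GRing.Theory.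
Local Open Scope ring_scope.

Section PolyMod.
Variable F : fieldType.
Implicit Types (d p q : {poly F}) (n a : nat).

Lemma eqp_mod_dvd d p q : (p %% d == q %% d) = (d %| p - q).
Proof. by rewrite -subr_eq0 -modpN -modpD; apply/eqP/modp_eq0P. Qed.

Lemma poly_sum_coef n p : (size p <= n)%N ->
  p = \sum_(j < n) (p`_j)%:P * 'X^j.
Proof.
move=> sp; rewrite -[LHS](take_poly_id sp) /take_poly poly_def.
by apply: eq_bigr => j _; rewrite mul_polyC.
Qed.

Lemma size_sum_monomials (I : finType) (u : I -> F) (e : I -> nat) B :
  (forall i, u i != 0 -> (e i < B)%N) ->
  (size (\sum_i (u i)%:P * 'X^(e i))%R <= B)%N.
Proof.
move=> lt_B; apply: (big_ind (fun q : {poly F} => size q <= B)%N).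
- by rewrite size_poly0.
- by move=> q q' sq sq'; rewrite (leq_trans (size_polyD _ _)) // geq_max sq.
move=> i _; have [->|ui_neq0] := eqVneq (u i) 0; first by rewrite mul0r size_poly0.
by rewrite mul_polyC size_scale // size_polyXn lt_B.
Qed.

Lemma dvdp_Xn_sub1_exp_mod n a : ('X^n - 1 : {poly F}) %| 'X^a - 'X^(a %% n).
Proof.
rewrite {1}(divn_eq a n) exprD mulnC exprM -{2}['X^(a %% n)]mul1r -mulrBl.
by apply: dvdp_mulr; rewrite -{2}(expr1n _ (a %/ n)) subrXX dvdp_mulr.
Qed.

Lemma modp_XnM n d a p : d %| 'X^n - 1 -> ('X^a * p) %% d = ('X^(a %% n) * p) %% d.
Proof.
move=> dvd_d; apply/eqP; rewrite eqp_mod_dvd -mulrBl dvdp_mulr //.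
exact: dvdp_trans dvd_d (dvdp_Xn_sub1_exp_mod n a).
Qed.

End PolyMod.

Section CyclicShift.
Variables (F : fieldType) (n : nat).
Implicit Types (d p : {poly F}) (a : nat).

Definition cyclic_shift a p : {poly F} :=
  \sum_(j < n) (p`_j)%:P * 'X^((a + j) %% n).

Lemma size_cyclic_shift_le a p B :
  (forall j : 'I_n, p`_j != 0 -> ((a + j) %% n < B)%N) ->
  (size (cyclic_shift a p) <= B)%N.
Proof. exact: size_sum_monomials. Qed.

Lemma size_cyclic_shift a p : (0 < n)%N -> (size (cyclic_shift a p) <= n)%N.
Proof. by move=> n_gt0; apply: size_cyclic_shift_le => j _; rewrite ltn_pmod. Qed.

Lemma coef_cyclic_shift_neq0 a p j : (cyclic_shift a p)`_j != 0 ->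
  exists2 t, (t < size p)%N & j = ((a + t) %% n)%N.
Proof.
rewrite coef_sum; under eq_bigr => t _ do rewrite coefCM coefXn.
case: (pickP (fun t : 'I_n => p`_t * (j == (a + t) %% n)%N%:R != 0)) => [t pt_neq0 _|no_t].
  case: (j =P (a + t) %% n)%N pt_neq0 => [->|_]; last by rewrite mulr0 eqxx.
  rewrite mulr1 => pt_neq0; exists t => //.
  by rewrite ltnNge; apply: contra pt_neq0 => /(nth_default 0) ->.
by rewrite big1 ?eqxx // => t _; apply/eqP/negbFE/no_t.
Qed.

Lemma dvdp_Xn_sub1_cyclic_shift a p : (size p <= n)%N ->
  ('X^n - 1) %| 'X^a * p - cyclic_shift a p.
Proof.
move=> sp; rewrite {1}(poly_sum_coef sp) mulr_sumr -sumrB.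
apply: (big_ind (fun q : {poly F} => 'X^n - 1 %| q)) => //; first exact: dvdp_add.
by move=> j _; rewrite mulrCA -exprD -mulrBr dvdp_mull // dvdp_Xn_sub1_exp_mod.
Qed.

Lemma modp_XnM_cyclic_shift d a p : d %| 'X^n - 1 -> (size p <= n)%N ->
  ('X^a * p) %% d = cyclic_shift a p %% d.
Proof.
move=> dvd_d sp; apply/eqP; rewrite eqp_mod_dvd.
exact: dvdp_trans dvd_d (dvdp_Xn_sub1_cyclic_shift a sp).
Qed.

End CyclicShift.

Section MaxMin.
Variables (T : Type) (P : T -> Prop) (phi : T -> nat -> nat).

Definition min_value (u : nat -> nat) (m : nat) : Prop :=
  (exists k, u k = m) /\ forall k, (m <= u k)%N.

Definition least (Q : nat -> Prop) (b : nat) : Prop :=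
  Q b /\ forall b', Q b' -> (b <= b')%N.

Definition max_min_value (M : nat) : Prop :=
  (exists x, P x /\ min_value (phi x) M) /\
  (forall x m, P x -> min_value (phi x) m -> (m <= M)%N).

Lemma min_value_exists (u : nat -> nat) : exists m, min_value u m.
Proof.
suff min_below N k : (u k <= N)%N -> exists m, min_value u m.
  exact: (min_below _ 0%N).
elim: N k => [|N IH] k ukN.
  by exists 0%N; split=> //; exists k; apply/eqP; rewrite -leqn0.
have [[k' lt_k'k]|no_smaller] := classic (exists k', (u k' < u k)%N).
  by apply: (IH k'); rewrite -ltnS (leq_trans lt_k'k ukN).
exists (u k); split=> [|k']; first by exists k.
by rewrite leqNgt; apply/negP => lt_k'k; apply: no_smaller; exists k'.
Qed.

Lemma least_iff (Q Q' : nat -> Prop) b :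
  (forall b', Q b' <-> Q' b') -> least Q b <-> least Q' b.
Proof.
by move=> QE; split=> -[Qb Qmin]; (split=> [|b' /QE]; [exact/QE | exact: Qmin]).
Qed.

Hypothesis P_inhabited : exists x, P x.

Lemma least_bound_max_min b :
  least (fun b => forall x, P x -> exists k, (phi x k <= b)%N) b <-> max_min_value b.
Proof.
split=> [[cover minimal]|[[x0 [Px0 [_ min_x0]]] ub]]; last first.
  split=> [x Px|b' cover']; last first.
    by have [k le_b'] := cover' x0 Px0; exact: leq_trans (min_x0 k) le_b'.
  have [m min_m] := min_value_exists (phi x).
  by case: (min_m) => [[k phi_m] _]; exists k; rewrite phi_m; exact: ub min_m.
have ub x m : P x -> min_value (phi x) m -> (m <= b)%N.
  by move=> /cover[k le_b] [_ min_m]; exact: leq_trans (min_m k) le_b.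
split=> //; case: b cover minimal ub => [|b] cover minimal ub.
  have [x Px] := P_inhabited; have [k] := cover x Px; rewrite leqn0 => /eqP phi0.
  by exists x; split=> //; split=> //; exists k.
have : ~ forall x, P x -> exists k, (phi x k <= b)%N.
  by move=> /minimal; rewrite ltnn.
move=> /not_all_ex_not[x] /(imply_to_and (P x))[Px no_k].
have [m min_m] := min_value_exists (phi x); case: (min_m) => [[k phi_m] _].
exists x; split=> //; suff -> : b.+1 = m by [].
apply/eqP; rewrite eqn_leq (ub x m Px min_m) andbT.
by rewrite -phi_m ltnNge; apply/negP => le_b; apply: no_k; exists k.
Qed.

End MaxMin.

Section Words.
Variable n : nat.
Implicit Types (c y : 'rV['F_2]_n) (p : {poly 'F_2}).

Lemma coef_word_poly c (j : 'I_n) : (word_poly c)`_j = c ord0 j.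
Proof.
rewrite coef_sum (bigD1 j) //= coefCM coefXn eqxx mulr1 big1 ?addr0 // => i ij.
by rewrite coefCM coefXn eq_sym (negbTE ij : (i : nat) == j = false) mulr0.
Qed.

Lemma size_word_poly c : (size (word_poly c) <= n)%N.
Proof. by apply: size_sum_monomials => j _; exact: ltn_ord. Qed.

Lemma word_polyB c y : word_poly (c - y) = word_poly c - word_poly y.
Proof. by rewrite -sumrB; apply: eq_bigr => j _; rewrite !mxE polyCB mulrBl. Qed.

Lemma word_poly_row p : (size p <= n)%N -> word_poly (\row_(j < n) p`_j) = p.
Proof.
by move=> sp; rewrite [RHS](poly_sum_coef sp); apply: eq_bigr => j _; rewrite mxE.
Qed.

End Words.

Section BurstCovering.
Variables (n : nat) (g : {poly 'F_2}).
Hypotheses (n_gt0 : (0 < n)%N) (g_dvd : g %| 'X^n - 1).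

Let Xn_sub1_neq0 : ('X^n - 1 : {poly 'F_2}) != 0.
Proof. by rewrite -size_poly_eq0 size_Xn_sub_1. Qed.

Let g_neq0 : g != 0.
Proof. by apply: contraNneq Xn_sub1_neq0 => g0; rewrite -dvd0p -g0. Qed.

Let size_g_le : (size g <= n.+1)%N.
Proof. by rewrite -(size_Xn_sub_1 'F_2 n_gt0); exact: dvdp_leq. Qed.

Lemma cyclic_codeP c : @cyclic_code n g c <-> g %| word_poly c.
Proof.
split=> [[a ->]|g_dvd_c]; first by rewrite -(dvdp_mod _ g_dvd) dvdp_mull.
exists (word_poly c %/ g).
by rewrite divpK // modp_small // size_Xn_sub_1 // ltnS size_word_poly.
Qed.

Lemma burst_covers_shift b : burst_covers (@cyclic_code n g) b ->
  forall f : {poly 'F_2}, (size f < size g)%N ->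
  exists k, (size (('X^k * f) %% g)%R <= b)%N.
Proof.
move=> cover f lt_fg; have fn : (size f <= n)%N by rewrite -ltnS (leq_trans lt_fg).
have [c [/cyclic_codeP g_dvd_c [i burst]]] := cover (\row_(j < n) f`_j).
set e := \row_(j < n) f`_j - c.
have fE : f = word_poly e + word_poly c by rewrite word_polyB word_poly_row // subrK.
exists (n - i)%N.
rewrite fE mulrDr modpD (modp_eq0 (dvdp_mull _ g_dvd_c)) addr0.
rewrite (modp_XnM_cyclic_shift _ g_dvd) ?size_word_poly //.
apply: leq_trans (leq_modp _ _) _; apply: size_cyclic_shift_le => j.
rewrite coef_word_poly => ej_neq0.
have [|t [lt_tb ->]] := burst j.
  by apply: contra ej_neq0; rewrite !mxE => /eqP ->; rewrite subrr.
rewrite modnDmr addnA subnK ?(ltnW (ltn_ord i)) // modnDl.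
exact: leq_ltn_trans (leq_mod t n) lt_tb.
Qed.

Lemma shift_burst_covers b :
  (forall f : {poly 'F_2}, (size f < size g)%N ->
    exists k, (size (('X^k * f) %% g)%R <= b)%N) ->
  burst_covers (@cyclic_code n g) b.
Proof.
move=> shift y; set s := word_poly y %% g.
have [k le_hb] := shift s (ltn_modpN0 _ g_neq0).
set h := ('X^k * s) %% g.
have hn : (size h <= n)%N by rewrite -ltnS (leq_trans (ltn_modpN0 _ g_neq0)).
pose i := Ordinal (ltn_pmod (n - k %% n) n_gt0).
have ik : ((i + k) %% n = 0)%N.
  by rewrite /= modnDml -modnDmr subnK ?modnn // ltnW // ltn_pmod.
set e := \row_(j < n) (cyclic_shift n i h)`_j.
exists (y - e); split.
  apply/cyclic_codeP; rewrite word_polyB word_poly_row ?size_cyclic_shift //.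
  rewrite -eqp_mod_dvd -(modp_XnM_cyclic_shift _ g_dvd) // modp_mul mulrA -exprD.
  by rewrite (modp_XnM _ _ g_dvd) ik mul1r modp_id.
exists i => j yj_neq; have : (cyclic_shift n i h)`_j != 0.
  by apply: contra yj_neq; rewrite !mxE => /eqP ->; rewrite subr0.
by case/coef_cyclic_shift_neq0 => t lt_th ->; exists t; rewrite (leq_trans lt_th).
Qed.

Lemma burst_covers_cyclic_codeE b : burst_covers (@cyclic_code n g) b <->
  forall f : {poly 'F_2}, (size f < size g)%N ->
  exists k, (size (('X^k * f) %% g)%R <= b)%N.
Proof. by split; [exact: burst_covers_shift | exact: shift_burst_covers]. Qed.

End BurstCovering.

Theorem corollary2 (n r : nat) (g : {poly 'F_2}) (b : nat) :
  (0 < n)%N ->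
  g %| ('X^n - 1) ->
  size g = r.+1 ->
  prod_distinct_irreducibles g ->
  burst_covering_radius (@cyclic_code n g) b <-> is_max_min_deg1 g r b.
Proof.
move=> n_gt0 g_dvd size_g _.
have covE := burst_covers_cyclic_codeE n_gt0 g_dvd; rewrite size_g in covE.
apply: iff_trans (least_iff b covE) _.
have inhabited : exists f : {poly 'F_2}, (size f <= r)%N by exists 0; rewrite size_poly0.
exact: (least_bound_max_min (fun f k => size (('X^k * f) %% g)) inhabited).
Qed.
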